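(* Let $G$ be a graph of order $n$ and maximum degree $3$. Then (i) $W^+(G,K_3)\ge n/2$, with equality if and only if $G$ is isomorphic to the disjoint union of $n/4$ copies of $K_4$; (ii) if $G$ has no connected component isomorphic to $K_4$, then $W^+(G,K_3)\ge 2n/3$, with equality if and only if $G$ contains the disjoint union of $n/3$ copies of $K_3$ as a subgraph; (iii) if $G$ has no connected component isomorphic to $K_4$ and each triangle of $G$ shares an edge with another triangle of $G$, then $W^+(G,K_3)\ge 3n/4$, with equality if and only if $G$ contains the disjoint union of $n/4$ copies of $K_4-e$ (i.e. $K_4$ minus an edge) as a subgraph.
   Context: A $K_3$-WORM coloring of a graph $G$ is an assignment of colors to the vertices of $G$ such that the three vertices of every triangle of $G$ receive exactly two distinct colors. For a $K_3$-WORM-colorable graph $G$ (every graph of maximum degree at most 3 is such), $W^+(G,K_3)$ denotes the maximum number of colors used in a $K_3$-WORM coloring of $G$. *)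

From mathcomp Require Import all_boot.
Set Implicit Arguments. Unset Strict Implicit. Unset Printing Implicit Defensive.

Section Graphs.
Variable T : finType.
Variable e : rel T.

Definition simple_graph := symmetric e /\ irreflexive e.

Definition deg (x : T) : nat := #|[set y | e x y]|.

Definition max_degree3 := (forall x, deg x <= 3) /\ (exists x, deg x = 3).

Definition triangle (t : {set T}) :=
  #|t| = 3 /\ forall x y, x \in t -> y \in t -> x != y -> e x y.

Definition ncolors_on (c : T -> nat) (t : {set T}) : nat :=
  size (undup [seq c x | x <- enum t]).

Definition ncolors (c : T -> nat) : nat := ncolors_on c [set: T].

Definition K3_WORM (c : T -> nat) := forall t, triangle t -> ncolors_on c t = 2.

Definition Wplus_K3 (k : nat) :=
  (exists c, K3_WORM c /\ ncolors c = k) /\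
  (forall c, K3_WORM c -> ncolors c <= k).

Definition component (x : T) : {set T} := [set y | connect e x y].

Definition has_K4_component :=
  exists x, #|component x| = 4 /\
    forall y z, y \in component x -> z \in component x -> y != z -> e y z.

Definition triangles_paired :=
  forall t, triangle t -> exists t', triangle t' /\ t' != t /\ 2 <= #|t :&: t'|.
End Graphs.

(* The disjoint union of m copies of a graph H on 'I_k: vertex set 'I_m * 'I_k *)
Definition copies (m : nat) {k : nat} (H : rel 'I_k) : rel ('I_m * 'I_k) :=
  fun u v => (u.1 == v.1) && H u.2 v.2.
Arguments copies m {k} H.

Definition K4 : rel 'I_4 := fun a b => a != b.
Definition K3 : rel 'I_3 := fun a b => a != b.
Definition K4_minus_e : rel 'I_4 :=
  fun a b => (a != b) && ~~ ((val a == 2) && (val b == 3) || (val a == 3) && (val b == 2)).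

Definition isomorphic (T U : finType) (e : rel T) (f : rel U) :=
  exists g : T -> U, bijective g /\ forall x y, e x y = f (g x) (g y).

(* f (on U) is a (not necessarily induced) subgraph of e (on T) *)
Definition contains_subgraph (T U : finType) (e : rel T) (f : rel U) :=
  exists g : U -> T, injective g /\ forall x y, f x y -> e (g x) (g y).

From mathcomp Require Import all_boot zify.
Set Implicit Arguments. Unset Strict Implicit. Unset Printing Implicit Defensive.

(* In a graph of maximum degree 3 every triangle lies in a K4 component, in a
   diamond K4 - e, or is isolated: none of its edges lies in another triangle.
   Choose a matching M with an edge in every triangle: the middle edge of each
   diamond, two disjoint edges of each K4 and, in each isolated triangle, the
   edge opposite its vertex of highest rank.  Giving both ends of each edge of M
   one colour and every other vertex a colour of its own is a K3-WORM colouring,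
   so 2 W+ >= n + u, where u counts the vertices missed by M.  This gives the
   bound in (i), and u = 0 forces every vertex into a K4 component.
   An apex of an edge of M is a common neighbour of its ends.  Outside K4
   components apices are missed by M, and by the degree bound no vertex is an
   apex of two edges of M, so n - u <= 2u; if every triangle shares an edge with
   another one, each edge of M has two apices and n - u <= u.  In the equality
   cases each edge of M has exactly one (two) apices and every vertex missed by M
   is an apex, so the edges of M with their apices partition the graph into
   triangles (copies of K4 - e).  Conversely a K3-WORM colouring uses at most two
   colours on a K3 or a K4 and at most three on a K4 - e. *)

Lemma eq_size_undup (A : eqType) (s1 s2 : seq A) :
  s1 =i s2 -> size (undup s1) = size (undup s2).
Proof.
move=> eq_s; apply/eqP; rewrite eqn_leq !uniq_leq_size ?undup_uniq // => x;
by rewrite !mem_undup eq_s.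
Qed.

Lemma size_undup_leq (A : eqType) (s1 s2 : seq A) :
  {subset s1 <= s2} -> size (undup s1) <= size s2.
Proof. by move=> sub; apply: uniq_leq_size (undup_uniq _) _ => x /[!mem_undup]/sub. Qed.

Lemma ncolors_onE (T : finType) (c : T -> nat) (t : {set T}) (s : seq T) :
  t =i s -> ncolors_on c t = size (undup (map c s)).
Proof.
move=> eq_ts; apply: eq_size_undup => a.
by apply/mapP/mapP => -[x x_in ->]; exists x => //; move: x_in; rewrite mem_enum eq_ts.
Qed.

Lemma card_set3 (T : finType) (a b c : T) :
  a != b -> a != c -> b != c -> #|[set a; b; c]| = 3.
Proof.
move=> ab ac bc; rewrite (@eq_card _ _ (mem [:: a; b; c])) => [|x]; last by rewrite !inE orbA.
by apply/card_uniqP; rewrite /= !inE negb_or ab ac bc.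
Qed.

Lemma size_undup3 (a b c : nat) : size (undup [:: a; b; c]) = 2 ->
  [|| a == b, a == c | b == c] && ~~ ((a == b) && (b == c)).
Proof. by rewrite /= !inE; case: (a =P b); case: (a =P c); case: (b =P c) => //=; lia. Qed.

Lemma size_undup4_le2 (a b c d : nat) :
  size (undup [:: a; b; c]) = 2 -> size (undup [:: a; b; d]) = 2 ->
  size (undup [:: a; c; d]) = 2 -> size (undup [:: b; c; d]) = 2 ->
  size (undup [:: a; b; c; d]) <= 2.
Proof.
move=> /size_undup3 abc /size_undup3 abd /size_undup3 acd /size_undup3 bcd.
have [ba|ab] := eqVneq b a.
  apply: (leq_trans (@size_undup_leq _ _ [:: a; c] _)) => // w.
  rewrite !inE => /or4P[]/eqP->; rewrite ?eqxx ?orbT //;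
  by move: abc abd acd bcd; rewrite ba; lia.
apply: (leq_trans (@size_undup_leq _ _ [:: a; b] _)) => // w.
rewrite !inE => /or4P[]/eqP->; rewrite ?eqxx ?orbT //;
by move: abc abd acd bcd ab; lia.
Qed.

Lemma map_enum_ord_iota (A : Type) n (f : 'I_n.+1 -> A) :
  [seq f j | j <- enum 'I_n.+1] = [seq f (inord j) | j <- iota 0 n.+1].
Proof. by rewrite -val_enum_ord -map_comp; apply: eq_map => j /=; rewrite inord_val. Qed.

Section Triangles.
Variables (T : finType) (e : rel T).
Hypotheses (esym : symmetric e) (eirr : irreflexive e).

Lemma edge_neq x y : e x y -> x != y.
Proof. by apply: contraTneq => ->; rewrite eirr. Qed.

Lemma triangle3 a b c : e a b -> e a c -> e b c -> triangle e [set a; b; c].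
Proof.
move=> ab ac bc; split; first by rewrite card_set3 ?edge_neq.
move=> x y; rewrite !inE -!orbA => /or3P[]/eqP-> /or3P[]/eqP->;
by rewrite ?eqxx // 1?esym.
Qed.

Lemma triangleP t : triangle e t ->
  exists x y z, [/\ t = [set x; y; z], e x y, e x z & e y z].
Proof.
case=> t3 adj; have [x xt] : exists x, x \in t by apply/card_gt0P; rewrite t3.
have /cards2P[y [z [yz tx]]] : #|t :\ x| == 2.
  by move: (cardsD1 x t); rewrite xt t3 add1n => -[<-].
have : y \in t :\ x /\ z \in t :\ x by rewrite tx !inE !eqxx orbT.
rewrite !inE => -[/andP[yx yt] /andP[zx zt]].
exists x, y, z; split; rewrite 1?adj // 1?eq_sym //.
by rewrite -setUA -tx setD1K.
Qed.

Variable c : T -> nat.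
Hypothesis WORM_c : K3_WORM e c.

Lemma WORM_triangle a b d : e a b -> e a d -> e b d ->
  size (undup [:: c a; c b; c d]) = 2.
Proof.
move=> ab ad bd; rewrite -(WORM_c (triangle3 ab ad bd)) (@ncolors_onE _ _ _ [:: a; b; d]) //.
by move=> w; rewrite !inE orbA.
Qed.

Lemma WORM_K3_block (q : 'I_3 -> T) : (forall i j, K3 i j -> e (q i) (q j)) ->
  size (undup [seq c (q j) | j <- enum 'I_3]) <= 2.
Proof.
move=> adj; rewrite map_enum_ord_iota [map _ _]/=.
by rewrite WORM_triangle // adj // /K3 -val_eqE /= !inordK.
Qed.

Lemma WORM_K4_block (q : 'I_4 -> T) : (forall i j, K4 i j -> e (q i) (q j)) ->
  size (undup [seq c (q j) | j <- enum 'I_4]) <= 2.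
Proof.
move=> adj; have {}adj i j : i < 4 -> j < 4 -> i != j -> e (q (inord i)) (q (inord j)).
  by move=> i4 j4 ij; apply: adj; rewrite /K4 -val_eqE /= !inordK.
rewrite map_enum_ord_iota [map _ _]/=.
by apply: size_undup4_le2; apply: WORM_triangle; apply: adj.
Qed.

Lemma WORM_K4_minus_e_block (q : 'I_4 -> T) :
  (forall i j, K4_minus_e i j -> e (q i) (q j)) ->
  size (undup [seq c (q j) | j <- enum 'I_4]) <= 3.
Proof.
move=> adj; have {}adj i j : i < 2 -> j < 3 -> i < j -> e (q (inord i)) (q (inord j)).
  move=> i2 j3 ij; apply: adj; rewrite /K4_minus_e -!val_eqE /= !inordK; lia.
rewrite map_enum_ord_iota [map _ _]/=.
set tri := [:: c (q (inord 0)); c (q (inord 1)); c (q (inord 2))].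
apply: (leq_trans (@size_undup_leq _ _ (undup tri ++ [:: c (q (inord 3))]) _)).
  by move=> w; rewrite mem_cat mem_undup !inE -!orbA.
by rewrite size_cat WORM_triangle ?adj.
Qed.

End Triangles.

Lemma isomorphic_contains_subgraph (T U : finType) (e : rel T) (f : rel U) :
  isomorphic e f -> contains_subgraph e f.
Proof.
case=> g [[g' gK g'K] eE]; exists g'; split; first exact: can_inj g'K.
by move=> u v; rewrite eE !g'K.
Qed.

Lemma ncolors_copies (T : finType) (e : rel T) (c : T -> nat) m k (H : rel 'I_k) b :
  (forall q : 'I_k -> T, (forall i j, H i j -> e (q i) (q j)) ->
     size (undup [seq c (q j) | j <- enum 'I_k]) <= b) ->
  m * k = #|T| -> contains_subgraph e (copies m H) -> ncolors c <= m * b.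
Proof.
move=> block_le cardT [h [h_inj h_adj]].
have [h' hK h'K] : bijective h by apply: inj_card_bij; rewrite // card_prod !card_ord cardT.
pose F i := undup [seq c (h (i, j)) | j <- enum 'I_k].
apply: (@leq_trans (size (flatten [seq F i | i <- enum 'I_m]))).
  apply: size_undup_leq => _ /mapP[x _ ->]; rewrite -[x]h'K; case: (h' x) => i j.
  apply/flattenP; exists (F i); first by rewrite map_f ?mem_enum.
  by rewrite mem_undup map_f ?mem_enum.
rewrite size_flatten /shape -map_comp -[m in m * b]size_enum_ord.
elim: (enum 'I_m) => [|i s IHs] //=; rewrite mulSn leq_add //.
by apply: block_le => j j' Hjj'; apply: h_adj; rewrite /copies /= eqxx.
Qed.

Section EqualBlocks.
Variables (T : finType) (B : T -> seq T) (s : nat).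
Hypotheses (B_refl : forall x, x \in B x) (B_trans : forall x y, y \in B x -> B y = B x).
Hypotheses (B_uniq : forall x, uniq (B x)) (B_size : forall x, size (B x) = s).

Lemma equal_blocks_prod (x0 : T) : exists m (g : T -> 'I_m * 'I_s),
  [/\ bijective g, m * s = #|T|,
      forall x y, ((g x).1 == (g y).1) = (B x == B y) &
      forall x, nth x0 (B x) (g x).2 = x].
Proof.
set S := undup [seq B x | x <- enum T].
have B_S x : B x \in S by rewrite mem_undup map_f ?mem_enum.
have S_B b : b \in S -> exists a, b = B a by rewrite mem_undup => /mapP[a _ ->]; exists a.
have idx_B x : index (B x) S < size S by rewrite index_mem.
have idx_x x : index x (B x) < s by rewrite -(B_size x) index_mem.
pose g x := (Ordinal (idx_B x), Ordinal (idx_x x)).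
pose h (u : 'I_(size S) * 'I_s) := nth x0 (nth [::] S u.1) u.2.
have gK : cancel g h by move=> x; rewrite /h /= !nth_index.
have hK : cancel h g.
  move=> [i j]; have [a Ba] := S_B _ (mem_nth [::] (ltn_ord i)).
  have j_a : j < size (B a) by rewrite B_size.
  have B_h : B (h (i, j)) = B a by rewrite /h /= Ba; apply/B_trans/mem_nth.
  congr (_, _); apply: val_inj; rewrite /= B_h.
    by rewrite -Ba index_uniq ?undup_uniq.
  by rewrite /h /= Ba index_uniq.
exists (size S), g; split=> [||x y|x]; first exact: Bijective gK hK.
- by rewrite (bij_eq_card (Bijective gK hK)) card_prod !card_ord.
- apply/eqP/eqP => [/(congr1 val) /= eq_idx|Bxy]; last by apply: val_inj; rewrite /= Bxy.
  by rewrite -(nth_index [::] (B_S x)) eq_idx nth_index.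
- by rewrite /= nth_index.
Qed.
End EqualBlocks.

Lemma enum_rank_nat_inj (T : finType) : injective (fun x : T => nat_of_ord (enum_rank x)).
Proof. by move=> x y /val_inj/enum_rank_inj. Qed.

Section InvolutionClasses.
Variables (T : finType) (p : T -> T).
Hypothesis pK : involutive p.

Definition pair_rank x : nat := minn (enum_rank x) (enum_rank (p x)).

Lemma pair_rank_eq x y : (pair_rank x == pair_rank y) = (y == x) || (y == p x).
Proof.
have rank_cases z : pair_rank z = enum_rank z \/ pair_rank z = enum_rank (p z).
  by rewrite /pair_rank; case: leqP => _; [left|right].
apply/eqP/idP => [|/orP[]/eqP->] //; last by rewrite /pair_rank pK minnC.
case: (rank_cases x) (rank_cases y) => -> [] -> /enum_rank_nat_inj;
[move=> ->|move=> ->|move=> ->|move/(can_inj pK)->]; by rewrite ?pK eqxx ?orbT.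
Qed.

Lemma ncolors_pair_rank : ncolors pair_rank * 2 = #|T| + #|[set x | p x == x]|.
Proof.
pose Reps := [set x | enum_rank x <= enum_rank (p x)].
have rankE x : x \in Reps -> pair_rank x = enum_rank x by rewrite inE => /minn_idPl.
have -> : ncolors pair_rank = #|Reps|.
  rewrite /ncolors /ncolors_on (@eq_size_undup _ _ [seq pair_rank x | x <- enum Reps]).
    rewrite undup_id ?size_map -?cardE // map_inj_in_uniq ?enum_uniq //.
    by move=> x y; rewrite !mem_enum => /rankE-> /rankE-> /enum_rank_nat_inj.
  move=> a; apply/mapP/mapP => -[x _ ->]; last by exists x; rewrite ?mem_enum ?inE.
  have [x_rep|p_rep] := boolP (x \in Reps); first by exists x; rewrite ?mem_enum.
  exists (p x); rewrite ?mem_enum ?inE; last by apply/eqP; rewrite pair_rank_eq eqxx orbT.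
  by move: p_rep; rewrite !inE pK -ltnNge => /ltnW.
have pReps : p @: Reps = p @^-1: Reps by apply: can_imset_pre.
have := cardsUI Reps (p @: Reps); rewrite card_imset; last exact: can_inj pK.
have -> : Reps :|: p @: Reps = setT.
  by apply/setP => x; rewrite pReps !inE pK leq_total.
have -> : Reps :&: p @: Reps = [set x | p x == x].
  apply/setP => x; rewrite pReps !inE pK -eqn_leq.
  by apply/eqP/eqP => [/enum_rank_nat_inj|->].
by rewrite cardsT; lia.
Qed.

End InvolutionClasses.

Lemma card_set_sum (T : finType) (P : pred T) : #|[set x | P x]| = \sum_x P x.
Proof. by rewrite -sum1dep_card big_mkcond; apply: eq_bigr => x _; case: (P x). Qed.

Lemma sum_card_rel (T : finType) (R : rel T) :
  \sum_x #|[set y | R x y]| = \sum_y #|[set x | R x y]|.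
Proof.
under eq_bigr do rewrite card_set_sum; rewrite exchange_big.
by under [RHS]eq_bigr do rewrite card_set_sum.
Qed.

Lemma leq_sum_eq (T : finType) (F G : T -> nat) :
  (forall x, F x <= G x) -> \sum_x G x <= \sum_x F x -> forall x, F x = G x.
Proof.
move=> FG sum_GF x; have [le_sum eq_sum] := leqif_sum (fun i (_ : predT i) => leqif_eq (FG i)).
have : \sum_x F x == \sum_x G x by rewrite eqn_leq le_sum sum_GF.
by rewrite eq_sum => /forallP/(_ x)/implyP/(_ isT)/eqP.
Qed.

(** * A matching meeting every triangle *)

Section Subcubic.
Variables (T : finType) (e : rel T).
Hypotheses (esym : symmetric e) (eirr : irreflexive e) (edeg : forall x, deg e x <= 3).

Definition cnbr (x y : T) : {set T} := [set w | e x w & e y w].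

Lemma cnbrC x y : cnbr x y = cnbr y x.
Proof. by apply/setP => w; rewrite !inE andbC. Qed.

Lemma subcubic_nbr x a b c d : e x a -> e x b -> e x c ->
  a != b -> a != c -> b != c -> e x d -> [|| d == a, d == b | d == c].
Proof.
move=> xa xb xc ab ac bc xd; apply/negPn/negP; rewrite !negb_or => /and3P[da db dc].
have : 4 <= deg e x.
  apply/card_geqP; exists [:: a; b; c; d]; split => //.
    by rewrite /= !inE !negb_or ab ac bc eq_sym da eq_sym db eq_sym dc.
  by move=> z; rewrite !inE => /or4P[] /eqP->.
by have := edeg x; lia.
Qed.

Lemma cnbr2_edges x y u v : cnbr x y = [set u; v] -> [/\ e x u, e y u, e x v & e y v].
Proof.
move=> cn_xy; have : (u \in cnbr x y) && (v \in cnbr x y) by rewrite cn_xy !inE !eqxx orbT.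
by rewrite !inE => /andP[/andP[-> ->] /andP[-> ->]].
Qed.

Lemma cnbr_shape x y z : e x y -> z \in cnbr x y ->
  cnbr x y = [set z] \/ exists2 w, w != z & cnbr x y = [set z; w].
Proof.
move=> xy z_in; have [w /andP[w_in wz]|none] := pickP [pred w in cnbr x y | w != z].
  right; exists w => //; apply/setP => t; rewrite in_set2.
  apply/idP/idP => [t_in|/orP[]/eqP-> //].
  apply/negPn/negP; rewrite negb_or => /andP[tz tw].
  move: z_in w_in t_in; rewrite !inE => /andP[xz yz] /andP[xw yw] /andP[xt yt].
  have [zw zt wt] : [/\ z != w, z != t & w != t] by rewrite ![_ == t]eq_sym eq_sym.
  case/or3P: (subcubic_nbr xz xw xt zw zt wt xy) => /eqP E;
  [move: yz|move: yw|move: yt]; by rewrite -E eirr.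
left; apply/setP => t; rewrite inE; apply/idP/eqP => [t_in|->] //.
by apply/eqP; move: (none t); rewrite /= t_in /= => /negbFE.
Qed.

Lemma nbr_cnbr2 x y u v w : e x y -> u != v -> cnbr x y = [set u; v] -> e x w ->
  [|| w == y, w == u | w == v].
Proof.
move=> xy uv cn_xy; have [xu yu xv yv] := cnbr2_edges cn_xy.
exact: subcubic_nbr xy xu xv (edge_neq eirr yu) (edge_neq eirr yv) uv.
Qed.

Definition rank_lt (x y : T) := enum_rank x < enum_rank y.

Lemma rank_lt_total x y : x != y -> rank_lt x y || rank_lt y x.
Proof. by rewrite /rank_lt -neq_ltn; apply: contra => /eqP/enum_rank_nat_inj->. Qed.

Definition rank_sep (x y u v : T) :=
  (maxn (enum_rank x) (enum_rank y) < minn (enum_rank u) (enum_rank v)) ||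
  (maxn (enum_rank u) (enum_rank v) < minn (enum_rank x) (enum_rank y)).

Lemma rank_sepC x y u v : rank_sep x y u v = rank_sep y x u v.
Proof. by rewrite /rank_sep [maxn (enum_rank x) _]maxnC [minn (enum_rank x) _]minnC. Qed.

Lemma rank_sepCr x y u v : rank_sep x y u v = rank_sep x y v u.
Proof. by rewrite /rank_sep [maxn (enum_rank u) _]maxnC [minn (enum_rank u) _]minnC. Qed.

Lemma rank_sep_excl x y u v : rank_sep x y u v -> ~~ rank_sep x u y v.
Proof. by rewrite /rank_sep; lia. Qed.

Lemma rank_sep_pairing a b c d : a != b -> a != c -> a != d -> b != c -> b != d -> c != d ->
  [|| rank_sep a b c d, rank_sep a c b d | rank_sep b c a d].
Proof.
move=> ab ac ad bc bd cd.
move: (rank_lt_total ab) (rank_lt_total ac) (rank_lt_total ad).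
move: (rank_lt_total bc) (rank_lt_total bd) (rank_lt_total cd).
by rewrite /rank_sep /rank_lt; lia.
Qed.

(* Diamond: [xy] is the middle edge, [u], [v] the tips.  K4: [x], [y] are the two
   lowest or the two highest ranked vertices.  Isolated triangle: [z] is the
   highest ranked vertex. *)
Definition mate (x y : T) := e x y && [||
  [exists u, exists v, [&& u != v, cnbr x y == [set u; v] & ~~ e u v]],
  [exists u, exists v, [&& u != v, cnbr x y == [set u; v], e u v & rank_sep x y u v]] |
  [exists z, [&& cnbr x y == [set z], cnbr x z == [set y], cnbr y z == [set x],
                 rank_lt x z & rank_lt y z]]].

Variant mate_spec x y : Prop :=
| MateDiamond u v of u != v & cnbr x y = [set u; v] & ~~ e u v
| MateK4 u v of u != v & cnbr x y = [set u; v] & e u v & rank_sep x y u v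
| MateTriangle z of cnbr x y = [set z] & cnbr x z = [set y] & cnbr y z = [set x]
    & rank_lt x z & rank_lt y z.

Lemma mateP x y : reflect (e x y /\ mate_spec x y) (mate x y).
Proof.
apply: (iffP andP) => -[xy mxy]; split=> //.
  case/or3P: mxy => [/existsP[u /existsP[v /and3P[uv /eqP cn_xy uv']]]|
                     /existsP[u /existsP[v /and4P[uv /eqP cn_xy uv' sep]]]|
                     /existsP[z /and5P[/eqP cn_xy /eqP cn_xz /eqP cn_yz xz yz]]].
  - exact: MateDiamond uv cn_xy uv'.
  - exact: MateK4 uv cn_xy uv' sep.
  - exact: MateTriangle cn_xy cn_xz cn_yz xz yz.
case: mxy => [u v uv cn_xy uv'|u v uv cn_xy uv' sep|z cn_xy cn_xz cn_yz xz yz];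
apply/or3P; [apply: Or31|apply: Or32|apply: Or33]; apply/existsP.
- by exists u; apply/existsP; exists v; rewrite uv cn_xy eqxx.
- by exists u; apply/existsP; exists v; rewrite uv cn_xy eqxx uv' sep.
- by exists z; rewrite cn_xy cn_xz cn_yz !eqxx xz yz.
Qed.

Lemma mate_intro x y : e x y -> mate_spec x y -> mate x y.
Proof. by move=> xy mxy; apply/mateP. Qed.

Lemma mate_edge x y : mate x y -> e x y.
Proof. by case/andP. Qed.

Lemma mate_sym x y : mate x y -> mate y x.
Proof.
case/mateP => xy mxy; apply/mateP; split; first by rewrite esym.
case: mxy => [u v uv cn_xy uv'|u v uv cn_xy uv' sep|z cn_xy cn_xz cn_yz xz yz].
- by apply: MateDiamond uv _ uv'; rewrite cnbrC.
- by apply: MateK4 uv _ uv' _; [rewrite cnbrC | rewrite rank_sepC].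
- by apply: (MateTriangle _ cn_yz cn_xz yz xz); rewrite cnbrC.
Qed.

Lemma mateC x y : mate x y = mate y x.
Proof. by apply/idP/idP => /mate_sym. Qed.

Lemma mate_cnbr x y : mate x y -> exists w, w \in cnbr x y.
Proof.
case/mateP => _ [u v _ -> _|u v _ -> _ _|z -> _ _ _ _];
by [exists u; rewrite !inE eqxx | exists z; rewrite inE].
Qed.

Lemma cnbr2_mem x y u v : cnbr x y = [set u; v] -> (u \in cnbr x y) && (v \in cnbr x y).
Proof. by move=> ->; rewrite !inE !eqxx orbT. Qed.

Lemma mem_set2_pair (a b y v : T) : a != b -> a \in [set y; v] -> b \in [set y; v] ->
  (a = y /\ b = v) \/ (a = v /\ b = y).
Proof.
rewrite !inE => ab /orP[]/eqP aE /orP[]/eqP bE; subst a b;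
by [left | right | rewrite eqxx in ab].
Qed.

Lemma mate_not_cnbr2 x y u v : e x y -> u != v -> cnbr x y = [set u; v] ->
  ~~ e u v \/ rank_sep x y u v -> ~~ mate x u.
Proof.
move=> xy uv cn_xy not_K4; apply/negP => /mateP[xu mxu].
have [_ yu _ yv] := cnbr2_edges cn_xy.
have sub_xu : cnbr x u \subset [set y; v].
  apply/subsetP => w; rewrite !inE => /andP[xw uw].
  case/or3P: (nbr_cnbr2 xy uv cn_xy xw) => /eqP E; subst w; rewrite ?eqxx ?orbT //.
  by rewrite eirr in uw.
have in_xu a : a \in cnbr x u -> a \in [set y; v] := subsetP sub_xu a.
case: mxu => [a b ab cn_xu ab'|a b ab cn_xu ab' sep|z cn_xu cn_xz _ _ _].
- have /andP[/in_xu a_in /in_xu b_in] := cnbr2_mem cn_xu.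
  by move: ab'; case: (mem_set2_pair ab a_in b_in) => -[-> ->]; rewrite ?yv // esym yv.
- have /andP[a_in b_in] := cnbr2_mem cn_xu.
  have [v_in sep'] : v \in cnbr x u /\ rank_sep x u y v.
    by case: (mem_set2_pair ab (in_xu a a_in) (in_xu b b_in)) => -[Ea Eb];
       move: a_in b_in sep; rewrite Ea Eb // rank_sepCr.
  have uv' : e u v by move: v_in; rewrite inE => /andP[].
  by case: not_K4 => [|/rank_sep_excl]; rewrite ?uv' ?sep'.
- have : y \in cnbr x u by rewrite inE xy esym yu.
  rewrite cn_xu inE => /eqP yz; rewrite -yz in cn_xz.
  have /andP[_] := cnbr2_mem cn_xy.
  by rewrite cn_xz inE eq_sym (negbTE uv).
Qed.

Lemma mate_not_top x y z : cnbr x y = [set z] -> cnbr x z = [set y] -> rank_lt y z ->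
  ~~ mate x z.
Proof.
move=> cn_xy cn_xz yz; apply/negP => /mateP[_].
case=> [a b ab cn_xz' _|a b ab cn_xz' _ _|w cn_xz' _ _ _ zw]; last first.
  have : y \in cnbr x z by rewrite cn_xz inE.
  by rewrite cn_xz' inE => /eqP wy; move: yz zw; rewrite /rank_lt wy; lia.
all: move: ab; have /andP[] := cnbr2_mem cn_xz'.
all: by rewrite cn_xz !inE => /eqP-> /eqP->; rewrite eqxx.
Qed.

Lemma mate_nonadj_nbr x a b : mate x a -> e x b -> b != a -> ~~ e a b ->
  exists z, cnbr x a = [set z] /\ cnbr x z = [set a].
Proof.
case/mateP => xa [u v uv cn_xa _|u v uv cn_xa _ _|z cn_xa cn_xz _ _ _] xb ba; last by exists z.
all: have [_ au _ av] := cnbr2_edges cn_xa.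
all: by move: ba; case/or3P: (nbr_cnbr2 xa uv cn_xa xb) => /eqP->; rewrite ?eqxx ?au ?av.
Qed.

Lemma mates_adj x y y' : mate x y -> mate x y' -> y != y' -> e y y'.
Proof.
move=> mxy mxy' yy'; apply/negPn/negP => nyy'.
have [xy xy'] := (mate_edge mxy, mate_edge mxy').
have y'y : y' != y by rewrite eq_sym.
have [z [cn_xy cn_xz]] := mate_nonadj_nbr mxy xy' y'y nyy'.
have ny'y : ~~ e y' y by rewrite esym.
have [z' [cn_xy' _]] := mate_nonadj_nbr mxy' xy yy' ny'y.
have /[!inE]/andP[xz yz] : z \in cnbr x y by rewrite cn_xy inE.
have /[!inE]/andP[xz' y'z'] : z' \in cnbr x y' by rewrite cn_xy' inE.
have y'z : y' != z by apply: contraNneq nyy' => ->.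
case/or3P: (subcubic_nbr xy xy' xz yy' (edge_neq eirr yz) y'z xz') => /eqP z'E.
- by move: nyy'; rewrite esym -z'E y'z'.
- by rewrite z'E eirr in y'z'.
- have : y' \in cnbr x z by rewrite inE xy' esym -z'E y'z'.
  by rewrite cn_xz inE (negbTE y'y).
Qed.

Lemma mate_uniq x y y' : mate x y -> mate x y' -> y = y'.
Proof.
move=> mxy mxy'; apply/eqP/contraT => yy'.
have y'_in : y' \in cnbr x y by rewrite inE (mate_edge mxy') (mates_adj mxy mxy' yy').
have not_tip u v : u != v -> cnbr x y = [set u; v] -> ~~ e u v \/ rank_sep x y u v ->
    y' \notin [set u; v].
  move=> uv cn_xy not_K4; rewrite !inE negb_or; apply/andP; split;
    apply: contraTneq mxy' => ->.
    exact: mate_not_cnbr2 (mate_edge mxy) uv cn_xy not_K4.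
  apply: (@mate_not_cnbr2 x y v u (mate_edge mxy)); rewrite 1?eq_sym 1?setUC //.
  by rewrite esym rank_sepCr.
case/mateP: mxy => _ [u v uv cn_xy D|u v uv cn_xy _ sep|z cn_xy cn_xz _ _ yz].
- by move: y'_in; rewrite cn_xy (negbTE (not_tip _ _ uv cn_xy (or_introl D))).
- by move: y'_in; rewrite cn_xy (negbTE (not_tip _ _ uv cn_xy (or_intror sep))).
- move: y'_in; rewrite cn_xy inE => /eqP y'z.
  by move: mxy'; rewrite y'z (negbTE (mate_not_top cn_xy cn_xz yz)).
Qed.

Lemma cnbr_K4 a b c d : e a b -> e a c -> e a d -> e b c -> e b d -> e c d ->
  cnbr a b = [set c; d].
Proof.
move=> ab ac ad bc bd cd; apply/setP => w; rewrite !inE.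
apply/idP/idP => [/andP[aw bw]|/orP[]/eqP->]; rewrite ?ac ?ad ?bc ?bd //.
have := subcubic_nbr ab ac ad (edge_neq eirr bc) (edge_neq eirr bd) (edge_neq eirr cd) aw.
case/or3P => /eqP E; rewrite E ?eqxx ?orbT //.
by rewrite E eirr in bw.
Qed.

Lemma triangle_cnbr2_mate a b c w : e a b -> e b c -> e a c -> w != c ->
  cnbr a b = [set c; w] -> [|| mate a b, mate b c | mate a c].
Proof.
move=> ab bc ac wc cn_ab; have [_ _ aw bw] := cnbr2_edges cn_ab.
have cw : c != w by rewrite eq_sym.
have [K4|cw'] := boolP (e c w); last by rewrite (mate_intro ab (MateDiamond cw cn_ab cw')).
have cn_ac : cnbr a c = [set b; w] by apply: cnbr_K4; rewrite // esym.
have cn_bc : cnbr b c = [set a; w] by apply: cnbr_K4; rewrite // esym.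
have aw' := edge_neq eirr aw; have bw' := edge_neq eirr bw.
have := rank_sep_pairing (edge_neq eirr ab) (edge_neq eirr ac) aw' (edge_neq eirr bc) bw' cw.
case/or3P => sep.
- by rewrite (mate_intro ab (MateK4 cw cn_ab K4 sep)).
- by rewrite (mate_intro ac (MateK4 bw' cn_ac bw sep)) !orbT.
- by rewrite (mate_intro bc (MateK4 aw' cn_bc aw sep)) orbT.
Qed.

Lemma triangle_has_mate x y z : e x y -> e y z -> e x z -> [|| mate x y, mate y z | mate x z].
Proof.
move=> xy yz xz; have [yx zy zx] : [/\ e y x, e z y & e z x] by split; rewrite esym.
have z_in : z \in cnbr x y by rewrite inE xz yz.
have y_in : y \in cnbr x z by rewrite inE xy zy.
have x_in : x \in cnbr y z by rewrite inE yx zx.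
case: (cnbr_shape xy z_in) => [cn_xy|[w wz cn_xy]]; last exact: triangle_cnbr2_mate cn_xy.
case: (cnbr_shape xz y_in) => [cn_xz|[w wy cn_xz]].
  case: (cnbr_shape yz x_in) => [cn_yz|[w wx cn_yz]].
    have : [|| rank_lt x z && rank_lt y z, rank_lt x y && rank_lt z y
             | rank_lt y x && rank_lt z x].
      move: (rank_lt_total (edge_neq eirr xy)) (rank_lt_total (edge_neq eirr yz)).
      by move: (rank_lt_total (edge_neq eirr xz)); rewrite /rank_lt; lia.
    case/or3P => /andP[top1 top2].
    - by rewrite (mate_intro xy (MateTriangle cn_xy cn_xz cn_yz top1 top2)).
    - rewrite cnbrC in cn_yz.
      by rewrite (mate_intro xz (MateTriangle cn_xz cn_xy cn_yz top1 top2)) !orbT.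
    - rewrite cnbrC in cn_xy; rewrite cnbrC in cn_xz.
      by rewrite (mate_intro yz (MateTriangle cn_yz cn_xy cn_xz top1 top2)) orbT.
  have := triangle_cnbr2_mate yz zx yx wx cn_yz.
  by rewrite (mateC z x) (mateC y x); case/or3P => ->; rewrite ?orbT.
have := triangle_cnbr2_mate xz zy xy wy cn_xz.
by rewrite (mateC z y); case/or3P => ->; rewrite ?orbT.
Qed.

Lemma diamond_tip_unmated x y u v t : e x y -> u != v -> cnbr x y = [set u; v] -> ~~ e u v ->
  ~~ mate u t.
Proof.
move=> xy uv cn_xy uv'; apply/negP => mut; have ut := mate_edge mut.
have [xu yu _ _] := cnbr2_edges cn_xy.
have yx : e y x by rewrite esym.
have cn_yx : cnbr y x = [set u; v] by rewrite cnbrC.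
have not_mate a b : e a b -> cnbr a b = [set u; v] -> t != a.
  move=> ab cn_ab; apply: contraTneq mut => ->; rewrite mateC.
  by apply: mate_not_cnbr2 ab uv cn_ab _; left.
have not_tnbr a b : e a b -> cnbr a b = [set u; v] -> e a t -> t != b -> False.
  move=> ab cn_ab a_t tb; case/or3P: (nbr_cnbr2 ab uv cn_ab a_t) => /eqP E.
  - by rewrite E eqxx in tb.
  - by rewrite E eirr in ut.
  - by rewrite -E ut in uv'.
have [w /[!inE]/andP[uw tw]] := mate_cnbr mut.
have [ux uy] : e u x /\ e u y by split; rewrite esym.
have [xt yt] : x != t /\ y != t.
  by split; rewrite eq_sym; [apply: not_mate xy _|apply: not_mate yx _].
case/or3P: (subcubic_nbr ux uy ut (edge_neq eirr xy) xt yt uw) => /eqP E; subst w.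
- by apply: not_tnbr xy cn_xy _ _; rewrite 1?esym // eq_sym.
- by apply: not_tnbr yx cn_yx _ _; rewrite 1?esym // eq_sym.
- by rewrite eirr in tw.
Qed.

Lemma triangle_top_unmated x y z t : e x y -> cnbr x y = [set z] -> cnbr x z = [set y] ->
  cnbr y z = [set x] -> rank_lt x z -> rank_lt y z -> ~~ mate z t.
Proof.
move=> xy cn_xy cn_xz cn_yz xz yz; apply/negP => mzt; have zt := mate_edge mzt.
have /[!inE]/andP[xz' yz'] : z \in cnbr x y by rewrite cn_xy inE.
have [zx zy] : e z x /\ e z y by split; rewrite esym.
have xt : x != t.
  rewrite eq_sym; apply: contraTneq mzt => ->; rewrite mateC.
  exact: mate_not_top cn_xy cn_xz yz.
have yt : y != t.
  rewrite eq_sym; apply: contraTneq mzt => ->; rewrite mateC.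
  by apply: mate_not_top cn_yz xz; rewrite cnbrC.
have [w /[!inE]/andP[zw tw]] := mate_cnbr mzt.
case/or3P: (subcubic_nbr zx zy zt (edge_neq eirr xy) xt yt zw) => /eqP E; subst w.
- have : t \in cnbr x z by rewrite inE esym tw zt.
  by rewrite cn_xz inE eq_sym (negbTE yt).
- have : t \in cnbr y z by rewrite inE esym tw zt.
  by rewrite cn_yz inE eq_sym (negbTE xt).
- by rewrite eirr in tw.
Qed.

Lemma mate_cnbr_K4_or_unmated x y : mate x y ->
  (exists u v, [/\ u != v, cnbr x y = [set u; v] & e u v]) \/
  (forall w t, w \in cnbr x y -> ~~ mate w t).
Proof.
case/mateP => xy [u v uv cn_xy uv'|u v uv cn_xy uv' _|z cn_xy cn_xz cn_yz xz yz].
- right => w t; rewrite cn_xy !inE => /orP[]/eqP->.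
    exact: diamond_tip_unmated xy uv cn_xy uv'.
  by apply: (@diamond_tip_unmated x y v u); rewrite 1?eq_sym 1?setUC // esym.
- by left; exists u, v.
- right => w t; rewrite cn_xy inE => /eqP->.
  exact: triangle_top_unmated xy cn_xy cn_xz cn_yz xz yz.
Qed.

Definition cl_nbhd (x : T) : {set T} := x |: [set y | e x y].

Lemma card_cl_nbhd x : #|cl_nbhd x| <= 4.
Proof. by rewrite cardsU1 (leq_add (leq_b1 _) (edeg x)). Qed.

Section K4Block.
Variables a b c d : T.
Hypotheses (ab : e a b) (ac : e a c) (ad : e a d) (bc : e b c) (bd : e b d) (cd : e c d).

Let Q := [set a; b; c; d].

Lemma K4_adj : {in Q &, forall p q, p != q -> e p q}.
Proof.
move=> p q; rewrite !inE -!orbA => /or4P[]/eqP-> /or4P[]/eqP->;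
by rewrite ?eqxx // 1?esym.
Qed.

Lemma K4_card : #|Q| = 4.
Proof.
rewrite (@eq_card _ _ (mem [:: a; b; c; d])) => [|x]; last by rewrite !inE -!orbA.
apply/card_uniqP; rewrite /= !inE !negb_or.
by rewrite !(edge_neq eirr).
Qed.

Lemma K4_cl_nbhd p : p \in Q -> cl_nbhd p = Q.
Proof.
move=> pQ; apply/eqP; rewrite eq_sym eqEcard K4_card card_cl_nbhd andbT.
apply/subsetP => q qQ; rewrite !inE; have [//|qp] := eqVneq q p.
by rewrite K4_adj // eq_sym.
Qed.

Lemma K4_closed p q : p \in Q -> e p q -> q \in Q.
Proof. by move=> pQ pq; rewrite -(K4_cl_nbhd pQ) !inE pq orbT. Qed.

Lemma K4_component : has_K4_component e.
Proof.
have aQ : a \in Q by rewrite !inE eqxx.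
have compQ : component e a = Q.
  apply/setP => r; rewrite inE; apply/idP/idP => [a_r|rQ].
    have Q_closed : closed e (mem Q).
      by move=> p q pq; apply/idP/idP => [/K4_closed|/K4_closed]; apply; rewrite // esym.
    by rewrite -(closed_connect Q_closed a_r).
  have [<-|ar] := eqVneq a r; first exact: connect0.
  exact/connect1/K4_adj.
by exists a; rewrite compQ K4_card; split=> // y z; apply: K4_adj.
Qed.

End K4Block.

Definition matched x := [exists y, mate x y].

Definition partner x := odflt x [pick y | mate x y].

Lemma mate_partner x : matched x -> mate x (partner x).
Proof. by rewrite /partner; case: pickP => [y //|none] /existsP[y]; rewrite none. Qed.

Lemma partner_unmatched x : ~~ matched x -> partner x = x.
Proof. by rewrite /partner; case: pickP => [y mxy|//] /existsP[]; exists y. Qed.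

Lemma partnerE x y : mate x y -> partner x = y.
Proof.
move=> mxy; have mx : matched x by apply/existsP; exists y.
exact: mate_uniq (mate_partner mx) mxy.
Qed.

Lemma partnerK : involutive partner.
Proof.
move=> x; have [mx|ux] := boolP (matched x); last by rewrite !partner_unmatched.
by apply: partnerE; rewrite mateC mate_partner.
Qed.

Lemma partner_eq x : (partner x == x) = ~~ matched x.
Proof.
apply/eqP/idP => [px|/partner_unmatched //]; apply/existsP => -[y mxy].
by move: (mate_edge mxy); rewrite -(partnerE mxy) px eirr.
Qed.

Lemma matched_partner x : matched (partner x) = matched x.
Proof. by apply: negb_inj; rewrite -!partner_eq partnerK eq_sym. Qed.

Definition mate_coloring := pair_rank partner.

Lemma mate_coloring_WORM : K3_WORM e mate_coloring.
Proof.
have pair_col a b d : mate a b -> e a d -> e b d -> ncolors_on mate_coloring [set a; b; d] = 2.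
  move=> mab ad bd; rewrite (@ncolors_onE _ _ _ [:: a; b; d]) => [|w]; last first.
    by rewrite !inE orbA.
  rewrite [map _ _]/=.
  have /eqP-> : mate_coloring a == mate_coloring b.
    by rewrite (pair_rank_eq partnerK) (partnerE mab) eqxx orbT.
  have bd' : mate_coloring b != mate_coloring d.
    rewrite (pair_rank_eq partnerK) (partnerE (mate_sym mab)) negb_or.
    by rewrite !(eq_sym d) !(edge_neq eirr).
  by rewrite /= !inE eqxx /= (negbTE bd').
move=> t /triangleP[x [y [z [-> xy xz yz]]]].
have [yx zx zy] : [/\ e y x, e z x & e z y] by split; rewrite esym.
case/or3P: (triangle_has_mate xy yz xz) => m; first exact: pair_col.
- have -> : [set x; y; z] = [set y; z; x].
    by apply/setP => w; rewrite !inE; case: (w == x); case: (w == y); case: (w == z).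
  exact: pair_col.
- have -> : [set x; y; z] = [set x; z; y].
    by apply/setP => w; rewrite !inE; case: (w == x); case: (w == y); case: (w == z).
  exact: pair_col.
Qed.

Lemma ncolors_mate_coloring :
  ncolors mate_coloring * 2 = #|T| + #|[set x | ~~ matched x]|.
Proof.
rewrite ncolors_pair_rank; last exact: partnerK.
by congr (_ + _); apply: eq_card => x; rewrite !inE partner_eq.
Qed.

Lemma K4_copies_of_all_matched (x0 : T) : (forall x, matched x) ->
  exists m, 4 * m = #|T| /\ isomorphic e (copies m K4).
Proof.
move=> allm; have xp x := mate_edge (mate_partner (allm x)).
have cl_K4 x : #|cl_nbhd x| = 4 /\ forall y, y \in cl_nbhd x -> cl_nbhd y = cl_nbhd x.
  have [[u [v [_ cn uv]]]|unm] := mate_cnbr_K4_or_unmated (mate_partner (allm x)); last first.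
    have [w w_in] := mate_cnbr (mate_partner (allm x)).
    by have /existsP[t mwt] := allm w; move: (unm w t w_in); rewrite mwt.
  have [xu pu xv pv] := cnbr2_edges cn.
  have xQ : x \in [set x; partner x; u; v] by rewrite !inE eqxx.
  rewrite (K4_cl_nbhd (xp x) xu xv pu pv uv xQ); split; first exact: K4_card.
  exact: K4_cl_nbhd.
pose B x := enum (cl_nbhd x).
have [||||m [g [g_bij card_m g1E g2E]]] := @equal_blocks_prod _ B 4 _ _ _ _ x0.
- by move=> x; rewrite mem_enum setU11.
- by move=> x y; rewrite /B mem_enum => /(proj2 (cl_K4 x)) ->.
- by move=> x; apply: enum_uniq.
- by move=> x; rewrite -cardE (proj1 (cl_K4 x)).
exists m; split; first by rewrite mulnC.
exists g; split => // x y; rewrite /copies /K4 g1E.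
apply/idP/andP => [xy|[/eqP Bxy g2]].
  have y_in : y \in cl_nbhd x by rewrite !inE xy orbT.
  have Bxy : B x = B y by rewrite /B (proj2 (cl_K4 x) y y_in).
  split; first by rewrite Bxy.
  apply: contraTneq xy => g2; have -> : x = y.
    by apply: (bij_inj g_bij); apply: injective_projections => //; apply/eqP; rewrite g1E Bxy.
  by rewrite eirr.
have : y \in B x by rewrite Bxy /B mem_enum setU11.
by rewrite /B mem_enum !inE => /orP[/eqP yx|//]; move: g2; rewrite yx eqxx.
Qed.

(** * Apices and double counting *)

Definition apex w x := matched x && (w \in cnbr x (partner x)).

Lemma card_apex x : #|[set w | apex w x]| = matched x * #|cnbr x (partner x)|.
Proof.
rewrite /apex; case: (matched x); last by rewrite mul0n; apply: eq_card0 => w; rewrite inE.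
by rewrite mul1n; apply: eq_card => w; rewrite inE.
Qed.

Lemma apex_pair w a b : apex w a -> apex w b -> b = a \/ b = partner a.
Proof.
case/andP => ma /[!inE]/andP[aw paw]; case/andP => mb /[!inE]/andP[bw pbw].
have [->|ba] := eqVneq b a; first by left.
have [->|bpa] := eqVneq b (partner a); first by right.
have [wa wpa wb wpb] : [/\ e w a, e w (partner a), e w b & e w (partner b)].
  by split; rewrite esym.
have apa : a != partner a by rewrite eq_sym partner_eq ma.
have [ab apb] : a != b /\ partner a != b by split; rewrite eq_sym.
case/or3P: (subcubic_nbr wa wpa wb apa ab apb wpb) => /eqP E.
- by move: bpa; rewrite -E partnerK eqxx.
- by move: ba; rewrite (can_inj partnerK E) eqxx.
- by have := partner_eq b; rewrite E eqxx mb.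
Qed.

Lemma card_apex_le2 w : #|[set x | apex w x]| <= 2.
Proof.
have [a wa|none] := pickP (apex w); last first.
  by rewrite (_ : [set x | apex w x] = set0) ?cards0 //; apply/setP => x; rewrite !inE none.
apply: (@leq_trans #|[set a; partner a]|); last by rewrite cards2; case: (_ != _).
apply/subset_leq_card/subsetP => x /[!inE] wx.
by case: (apex_pair wa wx) => ->; rewrite eqxx ?orbT.
Qed.

Lemma paired_cnbr2 (paired : triangles_paired e) x : matched x -> #|cnbr x (partner x)| = 2.
Proof.
move=> mx; case/mateP: (mate_partner mx) => xy.
case=> [u v uv -> _|u v uv -> _ _|z cn_xy cn_xz cn_yz _ _]; try by rewrite cards2 uv.
have /[!inE]/andP[xz yz] : z \in cnbr x (partner x) by rewrite cn_xy inE.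
set y := partner x in xy cn_xy cn_xz cn_yz xz yz; set t := [set x; y; z].
have cnbr_t a b : a \in t -> b \in t -> a != b -> cnbr a b \subset t.
  rewrite !inE -!orbA => /or3P[]/eqP-> /or3P[]/eqP->; rewrite ?eqxx // => _;
  rewrite ?(cnbrC y x) ?(cnbrC z x) ?(cnbrC z y) ?cn_xy ?cn_xz ?cn_yz;
  by apply/subsetP => w; rewrite !inE => ->; rewrite ?orbT.
have [t' [[t'3 adj'] [t't /card_gt1P[a [b [/setIP[a_t a_t'] /setIP[b_t b_t'] ab]]]]]] :=
  paired t (triangle3 esym eirr xy xz yz).
have : t' \subset t.
  apply/subsetP => c ct'; have [->|ca] := eqVneq c a => //; have [->|cb] := eqVneq c b => //.
  by apply: (subsetP (cnbr_t a b a_t b_t ab)); rewrite inE !adj' // eq_sym.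
have t3 : #|t| = 3.
  by rewrite card_set3 ?(edge_neq eirr xy) ?(edge_neq eirr xz) ?(edge_neq eirr yz).
by move=> t't_sub; move: t't; rewrite eqEcard t't_sub t'3 t3.
Qed.

Lemma card_apex_ge s x : (matched x -> s <= #|cnbr x (partner x)|) ->
  matched x * s <= #|[set w | apex w x]|.
Proof. by rewrite card_apex; case: (matched x) => // /(_ isT); rewrite !mul1n. Qed.

(** * Blocks of the extremal graphs *)

Definition pair_min x := if enum_rank x <= enum_rank (partner x) then x else partner x.

Lemma pair_min_cases x : pair_min x = x \/ pair_min x = partner x.
Proof. by rewrite /pair_min; case: ifP; [left|right]. Qed.

Lemma pair_min_partner x : pair_min (partner x) = pair_min x.
Proof.
rewrite /pair_min partnerK.
have [le|lt] := leqP (enum_rank x) (enum_rank (partner x)); last by rewrite (ltnW lt).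
have [ge|//] := leqP (enum_rank (partner x)) (enum_rank x).
by apply/enum_rank_nat_inj/eqP; rewrite eqn_leq ge le.
Qed.

(* The canonical end of the matched edge whose block contains [x]; the last
   branch is a junk value, unreachable once every unmatched vertex is an apex. *)
Definition base x :=
  if matched x then pair_min x else if [pick z | apex x z] is Some z then pair_min z else x.

Definition block b := [:: b, partner b & enum (cnbr b (partner b))].

Lemma mem_block_pair_min a y :
  (y \in block (pair_min a)) = [|| y == a, y == partner a | y \in cnbr a (partner a)].
Proof.
rewrite /block !in_cons mem_enum.
by case: (pair_min_cases a) => ->; rewrite ?partnerK // cnbrC orbCA.
Qed.

Lemma block_uniq b : matched b -> uniq (block b).
Proof.
move=> mb; rewrite /block /= !inE !mem_enum !inE !eirr /= andbF orbF enum_uniq !andbT.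
by rewrite eq_sym partner_eq mb.
Qed.

Lemma size_block b : size (block b) = #|cnbr b (partner b)|.+2.
Proof. by rewrite /block /= cardE. Qed.

Lemma block_adj x0 b i j : matched b -> i != j -> (i < 2) || (j < 2) ->
  i < size (block b) -> j < size (block b) -> e (nth x0 (block b) i) (nth x0 (block b) j).
Proof.
move=> mb ij ij2 i_lt j_lt; have bp := mate_edge (mate_partner mb).
have nbr k l : k < 2 -> k != l -> l < size (block b) ->
    e (nth x0 (block b) k) (nth x0 (block b) l).
  move=> k2 kl l_lt; have [l2|l2] := ltnP l 2.
    by case: k l k2 l2 kl {l_lt} => [|[|]] // [|[|]] //= _ _ _; rewrite esym.
  have /[!inE]/andP[bw pw] : nth x0 (block b) l \in cnbr b (partner b).
    by case: l l2 l_lt {kl} => [|[|l]] //= _ l_lt; rewrite -mem_enum mem_nth.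
  by case: k k2 kl => [|[|]].
case/orP: ij2 => [i2|j2]; first exact: nbr.
by rewrite esym; apply: nbr; rewrite // eq_sym.
Qed.

Section NoK4Component.
Hypothesis noK4 : ~ has_K4_component e.

Lemma apex_unmatched w x : apex w x -> ~~ matched w.
Proof.
case/andP => mx w_in; case: (mate_cnbr_K4_or_unmated (mate_partner mx)) => [|unmated].
  case=> u [v [_ cn_x uv]]; have [xu pu xv pv] := cnbr2_edges cn_x.
  by case: noK4; exact: K4_component (mate_edge (mate_partner mx)) xu xv pu pv uv.
by apply/existsP => -[t]; apply/negP; exact: unmated.
Qed.

Lemma card_apex_le w : #|[set x | apex w x]| <= (~~ matched w) * 2.
Proof.
have [mw|_] := boolP (matched w); last by rewrite mul1n card_apex_le2.
rewrite mul0n leqn0 cards_eq0; apply/eqP/setP => x; rewrite !inE.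
by apply/negP => /apex_unmatched; rewrite mw.
Qed.

Definition covered := forall w, ~~ matched w -> exists x, apex w x.

Section DoubleCount.
Variable s : nat.
Hypothesis s_le : forall x, matched x -> s <= #|cnbr x (partner x)|.

Let sum_lower : \sum_x matched x * s <= \sum_x #|[set w | apex w x]|.
Proof. by apply: leq_sum => x _; apply: card_apex_ge; apply: s_le. Qed.

Let sum_upper : \sum_w #|[set x | apex w x]| <= \sum_w ~~ matched w * 2.
Proof. by apply: leq_sum => w _; apply: card_apex_le. Qed.

Lemma double_count : #|[set x | matched x]| * s <= #|[set x | ~~ matched x]| * 2.
Proof.
rewrite !card_set_sum !big_distrl /=.
by apply: leq_trans sum_lower _; rewrite sum_card_rel; apply: sum_upper.
Qed.

Lemma double_count_eq : #|[set x | matched x]| * s = #|[set x | ~~ matched x]| * 2 ->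
  (forall x, matched x -> #|cnbr x (partner x)| = s) /\ covered.
Proof.
rewrite !card_set_sum !big_distrl /= => eq_sum; split=> [x mx|w uw].
  have := leq_sum_eq (fun x => card_apex_ge (s_le (x := x))) _ x.
  by rewrite card_apex mx !mul1n => -> //; rewrite sum_card_rel eq_sum; apply: sum_upper.
have := leq_sum_eq card_apex_le _ w; rewrite uw mul1n => card2.
have /card_gt0P[x] : 0 < #|[set x | apex w x]|.
  by rewrite card2 // -eq_sum -sum_card_rel; apply: sum_lower.
by rewrite inE; exists x.
Qed.

End DoubleCount.

Section Blocks.
Hypothesis every_apex : covered.

Lemma base_spec x : exists2 a, matched a & base x = pair_min a /\ x \in block (pair_min a).
Proof.
rewrite /base; have [mx|ux] := boolP (matched x).
  by exists x => //; rewrite mem_block_pair_min eqxx.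
case: pickP => [z /andP[mz x_in]|none].
  by exists z; rewrite // mem_block_pair_min x_in !orbT.
by have [z xz] := every_apex ux; move: (none z); rewrite xz.
Qed.

Lemma base_block a y : matched a -> y \in block (pair_min a) -> base y = pair_min a.
Proof.
move=> ma; rewrite mem_block_pair_min => /or3P[/eqP->|/eqP->|y_in].
- by rewrite /base ma.
- by rewrite /base matched_partner ma pair_min_partner.
- have ya : apex y a by rewrite /apex ma.
  rewrite /base (negbTE (apex_unmatched ya)).
  case: pickP => [z yz|none]; last by move: (none a); rewrite ya.
  by case: (apex_pair ya yz) => ->; rewrite ?pair_min_partner.
Qed.

Definition block_of x := block (base x).

Lemma matched_base x : matched (base x).
Proof.
have [a ma [-> _]] := base_spec x.
by case: (pair_min_cases a) => ->; rewrite ?matched_partner.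
Qed.

Lemma mem_block_of x : x \in block_of x.
Proof. by rewrite /block_of; have [a _ [-> ?]] := base_spec x. Qed.

Lemma block_of_trans x y : y \in block_of x -> block_of y = block_of x.
Proof. by have [a ma [E _]] := base_spec x; rewrite /block_of E => /(base_block ma)->. Qed.

End Blocks.

Lemma block_packing (x0 : T) s (H : rel 'I_s.+2) : covered ->
  (forall x, matched x -> #|cnbr x (partner x)| = s) ->
  (forall i j, H i j -> (i != j) && ((i < 2) || (j < 2))) ->
  exists m, m * s.+2 = #|T| /\ contains_subgraph e (copies m H).
Proof.
move=> cov cn_s H_adj.
have B_size x : size (block_of x) = s.+2 by rewrite size_block cn_s ?matched_base.
have B_uniq x : uniq (block_of x) by apply/block_uniq/matched_base.
have [m [g [[h gK hK] card_m g1E g2E]]] :=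
  equal_blocks_prod (mem_block_of cov) (block_of_trans cov) B_uniq B_size x0.
exists m; split => //; exists h; split=> [|[i k] [i' k'] /andP[/eqP /= ii' Hkk']].
  exact: can_inj hK.
have same : block_of (h (i, k)) = block_of (h (i', k')).
  by apply/eqP; rewrite -g1E !hK ii'.
rewrite -(g2E (h (i, k))) -(g2E (h (i', k'))) !hK /= same.
case/andP: (H_adj _ _ Hkk') => kk' k2.
by apply: block_adj; rewrite ?matched_base ?B_size.
Qed.

End NoK4Component.
End Subcubic.

Section Bounds.
Variables (T : finType) (e : rel T).
Hypotheses (esym : symmetric e) (eirr : irreflexive e) (edeg : forall x, deg e x <= 3).
Variables (x0 : T) (k : nat).
Hypothesis Wk : Wplus_K3 e k.

Local Notation nA := #|[set x | matched e x]|.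
Local Notation nU := #|[set x | ~~ matched e x]|.

Lemma card_matched_unmatched : nA + nU = #|T|.
Proof.
rewrite -(cardsC [set x | matched e x]); congr (_ + _).
by apply: eq_card => x; rewrite !inE.
Qed.

Lemma Wplus_ge_mate_coloring : #|T| + nU <= k * 2.
Proof.
rewrite -(ncolors_mate_coloring esym eirr edeg) leq_mul2r /=.
by case: Wk => _; apply; apply: mate_coloring_WORM.
Qed.

Lemma Wplus_le_copies m s (H : rel 'I_s) b :
  (forall c, K3_WORM e c -> forall q : 'I_s -> T, (forall i j, H i j -> e (q i) (q j)) ->
     size (undup [seq c (q j) | j <- enum 'I_s]) <= b) ->
  m * s = #|T| -> contains_subgraph e (copies m H) -> k <= m * b.
Proof.
move=> block_le card_m sub; case: Wk => -[c [Wc <-]] _.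
exact: ncolors_copies (block_le c Wc) card_m sub.
Qed.

Lemma K3_edge_shape (i j : 'I_3) : K3 i j -> (i != j) && ((i < 2) || (j < 2)).
Proof. by case: i j => [[|[|[|?]]] ?] [[|[|[|?]]] ?]. Qed.

Lemma K4_minus_e_edge_shape (i j : 'I_4) : K4_minus_e i j -> (i != j) && ((i < 2) || (j < 2)).
Proof. by case: i j => [[|[|[|[|?]]]] ?] [[|[|[|[|?]]]] ?]. Qed.

Lemma Wplus_half_bound :
  #|T| <= 2 * k /\ (2 * k = #|T| <-> exists m, 4 * m = #|T| /\ isomorphic e (copies m K4)).
Proof.
have ge := Wplus_ge_mate_coloring; split; first lia.
split=> [eq_k|[m [card_m iso]]].
  apply: K4_copies_of_all_matched => // x; apply: contraT => ux.
  have /eqP : nU = 0 by lia.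
  by rewrite cards_eq0 => /eqP/setP/(_ x); rewrite !inE ux.
have := Wplus_le_copies (WORM_K4_block esym eirr) (etrans (mulnC m 4) card_m)
          (isomorphic_contains_subgraph iso).
lia.
Qed.

Section NoK4.
Hypothesis noK4 : ~ has_K4_component e.

Lemma Wplus_two_thirds_bound :
  #|T| * 2 <= 3 * k /\
  (3 * k = #|T| * 2 <-> exists m, 3 * m = #|T| /\ contains_subgraph e (copies m K3)).
Proof.
have ge := Wplus_ge_mate_coloring; have nAU := card_matched_unmatched.
have cn1 x : matched e x -> 1 <= #|cnbr e x (partner e x)|.
  by move=> /mate_partner/mate_cnbr[w w_in]; apply/card_gt0P; exists w.
have := double_count esym eirr edeg noK4 cn1 => AU.
split; first lia.
split=> [eq_k|[m [card_m sub]]].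
  have AU_eq : nA * 1 = nU * 2 by lia.
  have [cn_eq cov] := double_count_eq esym eirr edeg noK4 cn1 AU_eq.
  have [m [card_m sub]] := block_packing esym eirr edeg noK4 x0 cov cn_eq K3_edge_shape.
  by exists m; split; first by rewrite mulnC.
have := Wplus_le_copies (WORM_K3_block esym eirr) (etrans (mulnC m 3) card_m) sub.
lia.
Qed.

Lemma Wplus_three_quarters_bound : triangles_paired e ->
  #|T| * 3 <= 4 * k /\
  (4 * k = #|T| * 3 <-> exists m, 4 * m = #|T| /\ contains_subgraph e (copies m K4_minus_e)).
Proof.
move=> paired; have ge := Wplus_ge_mate_coloring; have nAU := card_matched_unmatched.
have cn2 x : matched e x -> 2 <= #|cnbr e x (partner e x)|.
  by move=> /(paired_cnbr2 esym eirr paired) ->.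
have := double_count esym eirr edeg noK4 cn2 => AU.
split; first lia.
split=> [eq_k|[m [card_m sub]]].
  have AU_eq : nA * 2 = nU * 2 by lia.
  have [_ cov] := double_count_eq esym eirr edeg noK4 cn2 AU_eq.
  have [m [card_m sub]] := block_packing esym eirr edeg noK4 x0 cov
    (paired_cnbr2 esym eirr paired) K4_minus_e_edge_shape.
  by exists m; split; first by rewrite mulnC.
have := Wplus_le_copies (WORM_K4_minus_e_block esym eirr) (etrans (mulnC m 4) card_m) sub.
lia.
Qed.

End NoK4.
End Bounds.

Theorem mainTheorem10 (T : finType) (e : rel T) :
  simple_graph e -> max_degree3 e ->
  forall k : nat, Wplus_K3 e k ->
  (* (i) *)
  (#|T| <= 2 * k /\
   (2 * k = #|T| <->
    exists m, 4 * m = #|T| /\ isomorphic e (copies m K4))) /\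
  (* (ii) *)
  (~ has_K4_component e ->
   #|T| * 2 <= 3 * k /\
   (3 * k = #|T| * 2 <->
    exists m, 3 * m = #|T| /\ contains_subgraph e (copies m K3))) /\
  (* (iii) *)
  (~ has_K4_component e -> triangles_paired e ->
   #|T| * 3 <= 4 * k /\
   (4 * k = #|T| * 3 <->
    exists m, 4 * m = #|T| /\ contains_subgraph e (copies m K4_minus_e))).
Proof.
move=> [sym irr] [deg3 [x0 _]] k Wk.
split; first exact: (Wplus_half_bound sym irr deg3 x0 Wk).
split=> [noK4|noK4 paired]; first exact: (Wplus_two_thirds_bound sym irr deg3 x0 Wk noK4).
exact: (Wplus_three_quarters_bound sym irr deg3 x0 Wk noK4 paired).
Qed.
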